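(* Let $T\ge 2$ be an integer, $v>0$, $\theta\in(0,1)$, $\beta\in(0,1]$, and suppose $\theta\ge\beta>\theta^T$. Let $\nu:=\lfloor \log\beta/\log\theta\rfloor$. Consider the stopping problem on times $\{0,1,\dots,T\}$ in which, from the perspective of time $t$, stopping at time $t+j$ ($0\le j\le T-t$) has value $\theta^{T-t}v$ if $j=0$ and $\beta\theta^{T-t-j}v$ if $j\ge1$. A (pure) strategy is a map $\sigma:\{0,\dots,T\}\to\{0,1\}$ with $\sigma(T)=1$ ($1$ = stop, $0$ = continue); for $t<T$ let $\tau_\sigma(t)=\min\{s>t:\sigma(s)=1\}$. Define: - the naive strategy $\sigma_0$: $\sigma_0(T)=1$ and for $t<T$, $\sigma_0(t)=1$ iff $\theta^{T-t}v\ge\max_{1\le j\le T-t}\beta\theta^{T-t-j}v$; - the update $\sigma\mapsto\sigma'$: $\sigma'(T)=1$ and for $t<T$, $\sigma'(t)=1$ iff $\theta^{T-t}v\ge\beta\theta^{T-\tau_\sigma(t)}v$; set $\sigma_{n+1}=\sigma_n'$ for $n\ge 0$; - the sophisticated strategy $\sigma_S$: $\sigma_S(T)=1$ and, backward for $t=T-1,\dots,0$, $\sigma_S(t)=1$ iff $\theta^{T-t}v\ge\beta\theta^{T-\tau_{\sigma_S}(t)}v$. Then $\nu\in\{1,2,\dots,T-1\}$, and $\sigma_n=\sigma_S$ for $n=\lceil T/\nu\rceil$; that is, the naive strategy is turned into the sophisticated one after $\lceil T/\nu\rceil$ rounds of training.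
   Context: This is the present-biased optimal stopping problem with immediate reward: stopping at absolute time $s$ yields reward $\theta^{T-s}v$ (so waiting increases the reward by a factor $1/\theta$ per period), and any reward not received immediately is additionally discounted by the present-bias factor $\beta$. The problem is state-independent, so strategies depend only on time. Ties are broken in favour of stopping. In each training round the agent at time $t$ chooses whether to stop now, taking as given that from time $t+1$ on she follows the previous round's strategy. *)

From Stdlib Require Import Reals Lra Lia ZArith Arith List.
Open Scope R_scope.

(* A pure strategy: time -> bool (true = stop). Only times 0..T matter. *)
Definition strategy := nat -> bool.

Definition Rleb (x y : R) : bool := if Rle_dec x y then true else false.

Definition Rceil (r : R) : Z := (- Int_part (- r))%Z.

(* search fuel s: first s' >= s (within fuel steps) with sigma s' = true,
   returning the last position reached otherwise. *)
Fixpoint search (sigma : strategy) (fuel s : nat) : nat :=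
  match fuel with
  | O => s
  | S f => if sigma s then s else search sigma f (S s)
  end.

(* tau_sigma(t) = min { s > t : sigma s = 1 }, s ranging in (t, T]
   (returns T when no earlier stop; sigma T = 1 for all strategies here). *)
Definition tau (sigma : strategy) (T t : nat) : nat :=
  search sigma (T - S t) (S t).

Definition naive (T : nat) (theta beta v : R) : strategy := fun t =>
  if (T <=? t)%nat then true
  else forallb (fun j => Rleb (beta * theta ^ (T - t - j) * v) (theta ^ (T - t) * v))
               (seq 1 (T - t)).

Definition update (T : nat) (theta beta v : R) (sigma : strategy) : strategy :=
  fun t =>
  if (T <=? t)%nat then true
  else Rleb (beta * theta ^ (T - tau sigma T t) * v) (theta ^ (T - t) * v).

Fixpoint trained (T : nat) (theta beta v : R) (n : nat) : strategy :=
  match n with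
  | O => naive T theta beta v
  | S m => update T theta beta v (trained T theta beta v m)
  end.

(* Sophisticated strategy by backward induction: soph_aux k is correct on
   times >= T - k (and is "stop" elsewhere, which is never consulted). *)
Fixpoint soph_aux (T : nat) (theta beta v : R) (k : nat) : strategy :=
  match k with
  | O => fun _ => true
  | S k' => fun s =>
      if (s =? T - S k')%nat
      then Rleb (beta * theta ^ (T - tau (soph_aux T theta beta v k') T s) * v)
                (theta ^ (T - s) * v)
      else soph_aux T theta beta v k' s
  end.

Definition sophisticated (T : nat) (theta beta v : R) : strategy :=
  soph_aux T theta beta v T.

(** Since [theta ^ nu >= beta], waiting at most [nu] periods is never worth the
    present-bias discount, so an agent stops whenever the next stop of the
    continuation strategy is at most [nu] periods away.  In particular the
    sophisticated agent stops at every time ([beta <= theta]).  The naive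
    strategy stops on the last [nu] periods, and each round of training pushes
    the block of stopping times [nu] periods further back: [sigma_n] stops
    whenever [T - t <= (n + 1) nu], i.e. everywhere once [n nu >= T]. *)

From Stdlib Require Import Reals ZArith Arith Lra Lia List.
Open Scope R_scope.

Lemma search_ge (sigma : strategy) (fuel s : nat) : (s <= search sigma fuel s)%nat.
Proof.
  revert s; induction fuel as [|fuel IH]; intros s; simpl; [lia|].
  destruct (sigma s); [lia|]. specialize (IH (S s)); lia.
Qed.

Lemma search_le_fuel (sigma : strategy) (fuel s : nat) :
  (search sigma fuel s <= s + fuel)%nat.
Proof.
  revert s; induction fuel as [|fuel IH]; intros s; simpl; [lia|].
  destruct (sigma s); [lia|]. specialize (IH (S s)); lia.
Qed.

Lemma search_le_stop (sigma : strategy) (fuel s s' : nat) :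
  (s <= s' <= s + fuel)%nat -> sigma s' = true -> (search sigma fuel s <= s')%nat.
Proof.
  revert s; induction fuel as [|fuel IH]; intros s Hs' Hstop; simpl; [lia|].
  destruct (sigma s) eqn:Es; [lia|].
  destruct (Nat.eq_dec s s') as [<-|]; [congruence|].
  apply IH; [lia|exact Hstop].
Qed.

Lemma search_stop (sigma : strategy) (fuel s : nat) :
  sigma s = true -> search sigma fuel s = s.
Proof. destruct fuel; simpl; [reflexivity|]. now intros ->. Qed.

Lemma tau_gt (sigma : strategy) (T t : nat) : (t < tau sigma T t)%nat.
Proof. apply search_ge. Qed.

Lemma tau_le (sigma : strategy) (T t : nat) : (t < T)%nat -> (tau sigma T t <= T)%nat.
Proof. intros Ht. pose proof (search_le_fuel sigma (T - S t) (S t)). unfold tau; lia. Qed.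

Lemma tau_le_stop (sigma : strategy) (T t s : nat) :
  (t < s <= T)%nat -> sigma s = true -> (tau sigma T t <= s)%nat.
Proof. intros Hs Hstop. apply search_le_stop; [lia|exact Hstop]. Qed.

Lemma tau_next_stop (sigma : strategy) (T t : nat) :
  sigma (S t) = true -> tau sigma T t = S t.
Proof. apply search_stop. Qed.

Lemma Rleb_true (x y : R) : x <= y -> Rleb x y = true.
Proof. unfold Rleb; destruct (Rle_dec x y); [reflexivity|lra]. Qed.

Lemma pow_le_pow_le1 (x : R) (m n : nat) :
  0 <= x <= 1 -> (m <= n)%nat -> x ^ n <= x ^ m.
Proof.
  intros Hx Hmn. replace n with (m + (n - m))%nat by lia. rewrite pow_add.
  assert (Hle1 : x ^ (n - m) <= 1) by (rewrite <- (pow1 (n - m)); apply pow_incr; lra).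
  pose proof (pow_le x m ltac:(lra)). nra.
Qed.

Section Stopping.
Variables (T nu : nat) (v theta beta : R).
Hypotheses (Hv : 0 <= v) (Htheta : 0 <= theta <= 1) (Hbeta : beta <= theta ^ nu).

Lemma stop_now_dominates (t s : nat) :
  (t <= s <= T)%nat -> (s - t <= nu)%nat ->
  Rleb (beta * theta ^ (T - s) * v) (theta ^ (T - t) * v) = true.
Proof.
  intros Hts Hwait. apply Rleb_true, Rmult_le_compat_r; [exact Hv|].
  replace (T - t)%nat with ((s - t) + (T - s))%nat by lia. rewrite pow_add.
  assert (Hk : beta <= theta ^ (s - t)).
  { apply (Rle_trans _ _ _ Hbeta), pow_le_pow_le1; [exact Htheta|exact Hwait]. }
  pose proof (pow_le theta (T - s) ltac:(lra)). nra.
Qed.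

Lemma naive_stop (t : nat) : (T - t <= nu)%nat -> naive T theta beta v t = true.
Proof.
  intros Hnear. unfold naive. destruct (T <=? t)%nat eqn:ET; [reflexivity|].
  apply Nat.leb_gt in ET.
  apply forallb_forall. intros j Hj. apply in_seq in Hj.
  rewrite <- Nat.sub_add_distr. apply stop_now_dominates; lia.
Qed.

Lemma update_stop (sigma : strategy) (t : nat) :
  (tau sigma T t - t <= nu)%nat -> update T theta beta v sigma t = true.
Proof.
  intros Hnear. unfold update. destruct (T <=? t)%nat eqn:ET; [reflexivity|].
  apply Nat.leb_gt in ET.
  pose proof (tau_gt sigma T t). pose proof (tau_le sigma T t ET).
  apply stop_now_dominates; lia.
Qed.

Hypothesis Hnu : (1 <= nu)%nat.

Lemma trained_stop (n t : nat) :
  (t <= T)%nat -> (T - t <= S n * nu)%nat -> trained T theta beta v n t = true.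
Proof.
  revert t; induction n as [|n IH]; intros t Ht Hnear; simpl trained.
  - apply naive_stop; lia.
  - destruct (Nat.eq_dec t T) as [->|Ht'].
    + unfold update. now rewrite Nat.leb_refl.
    + (* [sigma_n] stops at [s], which lies at most [nu] periods after [t]. *)
      set (s := Nat.max (S t) (T - S n * nu)).
      assert (Hstop : trained T theta beta v n s = true) by (apply IH; lia).
      pose proof (tau_le_stop (trained T theta beta v n) T t s ltac:(lia) Hstop).
      apply update_stop; lia.
Qed.

Lemma soph_aux_stop (k t : nat) : soph_aux T theta beta v k t = true.
Proof.
  revert t; induction k as [|k IH]; intros t; simpl; [reflexivity|].
  destruct (t =? T - S k)%nat eqn:Et; [|apply IH].
  apply Nat.eqb_eq in Et.
  destruct (Nat.eq_dec T 0) as [->|HT].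
  - subst t. simpl. apply Rleb_true. rewrite !Rmult_1_r.
    pose proof (pow_le_pow_le1 theta 0 nu Htheta (Nat.le_0_l nu)). simpl in *. nra.
  - rewrite (tau_next_stop _ _ _ (IH (S t))). apply stop_now_dominates; lia.
Qed.

End Stopping.

Lemma le_pow_of_le_ln_ratio (theta beta : R) (k : nat) :
  0 < theta < 1 -> 0 < beta -> INR k <= ln beta / ln theta -> beta <= theta ^ k.
Proof.
  intros Htheta Hbeta Hk. apply Rnot_lt_le. intros Hlt.
  apply ln_increasing in Hlt; [|apply pow_lt; lra].
  rewrite ln_pow in Hlt by lra.
  assert (Hln : ln theta < 0) by (rewrite <- ln_1; apply ln_increasing; lra).
  assert (Hratio : ln beta = ln beta / ln theta * ln theta) by (field; lra).
  nra.
Qed.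

Lemma ln_ratio_ge_1 (theta beta : R) :
  0 < beta <= theta -> theta < 1 -> 1 <= ln beta / ln theta.
Proof.
  intros Hbeta Htheta.
  assert (Hln : ln theta < 0) by (rewrite <- ln_1; apply ln_increasing; lra).
  assert (Hle : ln beta <= ln theta).
  { destruct (Req_dec beta theta) as [->|Hne]; [lra|].
    apply Rlt_le, ln_increasing; lra. }
  apply (Rmult_le_reg_r (- ln theta)); [lra|].
  replace (ln beta / ln theta * - ln theta) with (- ln beta) by (field; lra). lra.
Qed.

Lemma ln_ratio_lt (theta beta : R) (T : nat) :
  0 < theta < 1 -> theta ^ T < beta -> ln beta / ln theta < INR T.
Proof.
  intros Htheta HT.
  assert (Hln : ln theta < 0) by (rewrite <- ln_1; apply ln_increasing; lra).
  apply ln_increasing in HT; [|apply pow_lt; lra].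
  rewrite ln_pow in HT by lra.
  apply (Rmult_lt_reg_r (- ln theta)); [lra|].
  replace (ln beta / ln theta * - ln theta) with (- ln beta) by (field; lra). lra.
Qed.

Lemma Rceil_ge (r : R) : r <= IZR (Rceil r).
Proof.
  unfold Rceil. rewrite opp_IZR. destruct (base_Int_part (- r)) as [Hfloor _]. lra.
Qed.

Lemma le_Rceil_div_mul (n : nat) (d : Z) :
  (0 < d)%Z -> (Z.of_nat n <= Rceil (INR n / IZR d) * d)%Z.
Proof.
  intros Hd. apply le_IZR. rewrite mult_IZR, <- INR_IZR_INZ.
  assert (Hd' : 0 < IZR d) by (apply IZR_lt; exact Hd).
  pose proof (Rceil_ge (INR n / IZR d)) as Hceil.
  apply (Rmult_le_compat_r (IZR d)) in Hceil; [|lra].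
  unfold Rdiv in Hceil. rewrite Rmult_assoc, Rinv_l, Rmult_1_r in Hceil by lra.
  exact Hceil.
Qed.

Theorem proposition5p2 (T : nat) (v theta beta : R) :
  (2 <= T)%nat -> 0 < v -> 0 < theta < 1 -> 0 < beta <= 1 ->
  theta >= beta -> beta > theta ^ T ->
  let nu := Int_part (ln beta / ln theta) in
  (1 <= nu <= Z.of_nat T - 1)%Z /\
  (forall t : nat, (t <= T)%nat ->
     trained T theta beta v (Z.to_nat (Rceil (INR T / IZR nu))) t
     = sophisticated T theta beta v t).
Proof.
  intros HT Hv Htheta Hbeta Hbt HbT nu.
  pose proof (ln_ratio_ge_1 theta beta ltac:(lra) ltac:(lra)) as Hr1.
  pose proof (ln_ratio_lt theta beta T Htheta HbT) as HrT.
  destruct (base_Int_part (ln beta / ln theta)) as [Hfloor Hfloor'].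
  fold nu in Hfloor, Hfloor'.
  assert (Hnu : (1 <= nu <= Z.of_nat T - 1)%Z).
  { assert (Hpos : IZR 0 < IZR nu) by lra.
    assert (HltT : IZR nu < IZR (Z.of_nat T)) by (rewrite <- INR_IZR_INZ; lra).
    apply lt_IZR in Hpos, HltT. lia. }
  split; [exact Hnu|].
  assert (Hpow : beta <= theta ^ Z.to_nat nu).
  { apply le_pow_of_le_ln_ratio; [exact Htheta|lra|].
    rewrite INR_IZR_INZ, Z2Nat.id by lia. exact Hfloor. }
  pose proof (le_Rceil_div_mul T nu ltac:(lia)) as Hrounds.
  intros t Ht. unfold sophisticated.
  rewrite (soph_aux_stop T (Z.to_nat nu)) by (lra || lia).
  apply (trained_stop T (Z.to_nat nu)); try lra; lia.
Qed.
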